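(* Let $\{S_i\}_{i\in\mathcal I}$ be a finite family of contracting similarities of $\mathbb{R}^d$, written $S_i(x)=c_iM_i(x)+b_i$ with $c_i\in(0,1)$, $M_i$ orthogonal and $b_i\in\mathbb{R}^d$, and let $T_i(x)=c_iM_i(x)$. Let $\gamma\ge0$ be defined by $\limsup_{k\to\infty}|\{T_I: I\in\mathcal I_k\}|^{1/k}=2^\gamma$. If $d=1$ or $d=2$, or if the matrices $M_i$ ($i\in\mathcal I$) commute, then $\gamma=0$.
   Context: $\mathcal I^*$ is the set of finite non-empty words over $\mathcal I$; for $I=(i_1,\dots,i_k)$, $T_I=T_{i_1}\circ\cdots\circ T_{i_k}$ and $c_I=c_{i_1}\cdots c_{i_k}$. For $k\ge0$, $\mathcal I_k=\{I\in\mathcal I^*: 2^{-k-1}<c_I\le2^{-k}\}$. *)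

From HB Require Import structures.
From mathcomp Require Import all_boot all_order all_algebra.
From mathcomp Require Import all_classical all_reals all_analysis.
From mathcomp Require Import finmap.
Set Implicit Arguments. Unset Strict Implicit. Unset Printing Implicit Defensive.
Import Order.TTheory GRing.Theory Num.Theory.
Local Open Scope classical_set_scope.
Local Open Scope ring_scope.

Definition orthogonal_mx (R : realType) (d : nat) (M : 'M[R]_d) : Prop :=
  M *m M^T = 1%:M.

Definition word_ratio (R : realType) (I : finType) (c : I -> R) (w : seq I) : R :=
  \prod_(i <- w) c i.

(* Matrix of T_I = T_{i1} o ... o T_{ik}, where T_i x = c_i M_i x *)
Definition word_map (R : realType) (d : nat) (I : finType) (c : I -> R)
    (M : I -> 'M[R]_d) (w : seq I) : 'M[R]_d :=
  foldr (fun i A => (c i *: M i) *m A) 1%:M w.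

Definition words_level (R : realType) (I : finType) (c : I -> R) (k : nat)
    : set (seq I) :=
  [set w | w != [::] /\ (2%:R ^- k.+1 < word_ratio c w) /\ (word_ratio c w <= 2%:R ^- k)].

(* number of distinct maps T_I with I in \mathcal I_k (this set is finite) *)
Definition num_maps_level (R : realType) (d : nat) (I : finType) (c : I -> R)
    (M : I -> 'M[R]_d) (k : nat) : nat :=
  #|` fset_set (word_map c M @` words_level c k)|.

From HB Require Import structures.
From mathcomp Require Import all_boot all_order all_algebra.
From mathcomp Require Import all_classical all_reals all_analysis.
From mathcomp Require Import finmap.
From mathcomp Require Import ring lra zify.
Set Implicit Arguments. Unset Strict Implicit. Unset Printing Implicit Defensive.
Import Order.TTheory GRing.Theory Num.Theory.
Local Open Scope classical_set_scope.
Local Open Scope ring_scope.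

(* T_I is c_I times the product M_I of the M_i along I.  If the M_i commute,
   M_I only depends on how often each letter occurs in I.  In the plane every
   orthogonal M_i is a rotation, possibly followed by the reflection
   F = diag(1, -1); as F conjugates rotations into rotations, all the
   reflections can be pushed to the right end of the product, and then M_I only
   depends on how often each letter occurs with an even, resp. odd, number of
   reflections before it.  Since the words of \mathcal I_k have length O(k),
   in all three cases at most polynomially many maps T_I arise from
   \mathcal I_k; the k-th root of a polynomial in k tends to 1, and infinitely
   many \mathcal I_k are nonempty. *)

Section MatrixProduct.
Variables (R : pzRingType) (n : nat) (T : Type).

Definition mxprod (f : T -> 'M[R]_n) (s : seq T) : 'M[R]_n :=
  foldr (fun x A => f x *m A) 1%:M s.

Lemma mxprod_cat f s1 s2 : mxprod f (s1 ++ s2) = mxprod f s1 *m mxprod f s2.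
Proof. by elim: s1 => [|x s IH] /=; rewrite ?mul1mx // IH mulmxA. Qed.

Lemma mxprod_comm f x s : (forall y, f x *m f y = f y *m f x) ->
  f x *m mxprod f s = mxprod f s *m f x.
Proof.
move=> fxC; elim: s => [|y s IH] /=; first by rewrite mulmx1 mul1mx.
by rewrite mulmxA fxC -!mulmxA IH.
Qed.

End MatrixProduct.

Lemma mxprod_perm (R : pzRingType) n (T : eqType) (f : T -> 'M[R]_n) s1 s2 :
  (forall x y, f x *m f y = f y *m f x) -> perm_eq s1 s2 ->
  mxprod f s1 = mxprod f s2.
Proof.
move=> fC; elim: s1 s2 => [|x s1 IH] s2; first by rewrite perm_sym => /perm_nilP ->.
move=> eq_s12; have : x \in s2 by rewrite -(perm_mem eq_s12) mem_head.
move: eq_s12 => /[swap] /splitPr[s3 s4].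
rewrite -[x :: s4]cat1s perm_sym perm_catCA /= perm_cons perm_sym => /IH ->.
by rewrite /= !mxprod_cat /= mulmxA (mxprod_comm _ (fC x)) mulmxA.
Qed.

Lemma word_mapE (R : realType) d (I : finType) (c : I -> R) (M : I -> 'M[R]_d) w :
  word_map c M w = word_ratio c w *: mxprod M w.
Proof.
elim: w => [|i w IH] /=; first by rewrite /word_ratio big_nil scale1r.
by rewrite /word_ratio big_cons -/(word_ratio c w) IH -scalemxAl -scalemxAr scalerA.
Qed.

Lemma word_map_perm (R : realType) d (I : finType) (c : I -> R) (M : I -> 'M[R]_d)
    w1 w2 :
  perm_eq w1 w2 -> mxprod M w1 = mxprod M w2 -> word_map c M w1 = word_map c M w2.
Proof. by move=> eq_w eq_M; rewrite !word_mapE eq_M /word_ratio (perm_big _ eq_w). Qed.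

Definition perm_coding (T : Type) (I : Type) (J : eqType)
    (F : seq I -> T) (Q : seq I -> seq J) :=
  (forall w, size (Q w) = size w) /\
  (forall w1 w2, perm_eq (Q w1) (Q w2) -> F w1 = F w2).

Lemma card_image_perm_coding (T : Type) (I : choiceType) (J : finType)
    (F : seq I -> T) (Q : seq I -> seq J) (S : set (seq I)) (L : nat) :
  perm_coding F Q -> (forall w, S w -> (size w <= L)%N) ->
  (F @` S #<= `I_(L.+1 ^ #|J|))%card.
Proof.
move=> [sizeQ permQ] sizeS.
pose K := {ffun J -> 'I_L.+1}.
pose key (w : seq I) : K := [ffun j => inord (count_mem j (Q w))].
have key_perm w1 w2 : S w1 -> S w2 -> key w1 = key w2 -> perm_eq (Q w1) (Q w2).
  move=> Sw1 Sw2 /ffunP eq_key; apply/allP => j _.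
  have count_le u : S u -> (count_mem j (Q u) < L.+1)%N.
    by move=> Su; rewrite ltnS (leq_trans (count_size _ _)) // sizeQ sizeS.
  move: (eq_key j); rewrite !ffunE => /(congr1 (@nat_of_ord _)).
  by rewrite !inordK ?count_le // => /eqP.
pose G (k : 'I_#|{: K}|) := F (xget [::] [set w | S w /\ key w = enum_val k]).
have sub_G : F @` S `<=` G @` [set: 'I_#|{: K}|].
  move=> _ [w Sw <-]; exists (enum_rank (key w)) => //; rewrite /G enum_rankK.
  case: xgetP => [w' _ [Sw' eq_key]|/(_ w)[]//].
  exact/permQ/key_perm.
have -> : (L.+1 ^ #|J|)%N = #|{: K}| by rewrite card_ffun card_ord.
apply: card_le_trans (subset_card_le sub_G) _.
apply: card_le_trans (card_image_le _ _) _.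
by case/card_eqPle: (card_esym (@card_II #|{: K}|)).
Qed.

Lemma ord2P (i : 'I_2) : i = ord0 \/ i = ord_max.
Proof. by case: i => [[|[|k]] lt_i2]; [left|right|]; try apply/val_inj. Qed.

Fixpoint tag_parity (I : Type) (e : I -> bool) (p : bool) (w : seq I) : seq (I * bool) :=
  if w is i :: w' then (i, p) :: tag_parity e (p (+) e i) w' else [::].

Lemma tag_parity_fst (I : Type) (e : I -> bool) p w : map fst (tag_parity e p w) = w.
Proof. by elim: w p => [|i w IH] p //=; rewrite IH. Qed.

Section RotationsOfThePlane.
Variable R : comRingType.

Lemma mulmx2E (A B : 'M[R]_2) i j :
  (A *m B) i j = A i ord0 * B ord0 j + A i ord_max * B ord_max j.
Proof.
rewrite mxE !big_ord_recl big_ord0 addr0.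
by have -> : lift ord0 ord0 = ord_max :> 'I_2 by apply: val_inj.
Qed.

Definition is_rot2 (A : 'M[R]_2) :=
  A ord_max ord_max = A ord0 ord0 /\ A ord0 ord_max = - A ord_max ord0.

Definition refl2 : 'M[R]_2 := \matrix_(i, j) ((i == j)%:R * (if i == ord0 then 1 else -1)).

Lemma refl2E :
  [/\ refl2 ord0 ord0 = 1, refl2 ord0 ord_max = 0,
      refl2 ord_max ord0 = 0 & refl2 ord_max ord_max = -1].
Proof. by rewrite !mxE /=; split; ring. Qed.

Lemma refl2K : refl2 *m refl2 = 1%:M.
Proof.
have [e00 e01 e10 e11] := refl2E; apply/matrixP => i j; rewrite mulmx2E !mxE.
by case: (ord2P i) => ->; case: (ord2P j) => ->; rewrite /= ?e00 ?e01 ?e10 ?e11 /=; ring.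
Qed.

Lemma rot2_comm (A B : 'M[R]_2) : is_rot2 A -> is_rot2 B -> A *m B = B *m A.
Proof.
move=> [a1 a2] [b1 b2]; apply/matrixP => i j; rewrite !mulmx2E.
by case: (ord2P i) => ->; case: (ord2P j) => ->; rewrite ?a1 ?a2 ?b1 ?b2; ring.
Qed.

Lemma rot2_conj_refl (A : 'M[R]_2) : is_rot2 A -> is_rot2 (refl2 *m A *m refl2).
Proof.
have [e00 e01 e10 e11] := refl2E.
by move=> [a1 a2]; split; rewrite !mulmx2E ?e00 ?e01 ?e10 ?e11 ?a1 ?a2; ring.
Qed.

Definition refl2_pow (b : bool) : 'M[R]_2 := if b then refl2 else 1%:M.

Lemma refl2_powM p q : refl2_pow p *m refl2_pow q = refl2_pow (p (+) q).
Proof. by case: p; case: q; rewrite /= ?refl2K ?mulmx1 ?mul1mx. Qed.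

Section ReflectionsToTheRight.
Variables (I : Type) (A : I -> 'M[R]_2) (e : I -> bool).

Definition conj_refl2 (x : I * bool) := refl2_pow x.2 *m A x.1 *m refl2_pow x.2.

Lemma mxprod_refl2_right p w :
  refl2_pow p *m mxprod (fun i => A i *m refl2_pow (e i)) w =
  mxprod conj_refl2 (tag_parity e p w) *m refl2_pow (p (+) odd (count e w)).
Proof.
elim: w p => [|i w IH] p /=; first by rewrite addbF mulmx1 mul1mx.
have move_refl : refl2_pow p *m A i = conj_refl2 (i, p) *m refl2_pow p.
  by rewrite /conj_refl2 -!mulmxA refl2_powM addbb mulmx1.
rewrite !mulmxA move_refl -(mulmxA (conj_refl2 _)) refl2_powM -mulmxA IH !mulmxA.
by rewrite oddD oddb addbA.
Qed.

End ReflectionsToTheRight.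

End RotationsOfThePlane.

Lemma unit_vector_orthogonal (R : idomainType) (p q r t : R) :
  p * p + q * q = 1 -> p * r + q * t = 0 -> r * r + t * t = 1 ->
  (r = - q /\ t = p) \/ (r = q /\ t = - p).
Proof.
move=> pq1 pq_rt rt1; set l := p * t - q * r.
have r_eq : r = - (l * q).
  apply/eqP; rewrite -addr_eq0; apply/eqP.
  transitivity (p * (p * r + q * t) + r * (1 - (p * p + q * q))); first by rewrite /l; ring.
  by rewrite pq_rt pq1 subrr !mulr0 addr0.
have t_eq : t = l * p.
  apply/eqP; rewrite -subr_eq0; apply/eqP.
  transitivity (q * (p * r + q * t) + t * (1 - (p * p + q * q))); first by rewrite /l; ring.
  by rewrite pq_rt pq1 subrr !mulr0 addr0.
have : l ^+ 2 == 1.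
  apply/eqP; transitivity (l ^+ 2 * (p * p + q * q)); first by rewrite pq1 mulr1.
  by rewrite -rt1 r_eq t_eq; ring.
rewrite sqrf_eq1 => /orP[] /eqP l_eq; rewrite l_eq in r_eq t_eq.
  by left; split; rewrite ?r_eq ?t_eq; ring.
by right; split; rewrite ?r_eq ?t_eq; ring.
Qed.

Lemma orthogonal2_rot (R : realType) (A : 'M[R]_2) :
  orthogonal_mx A -> is_rot2 A \/ is_rot2 (A *m refl2 R).
Proof.
move=> AAT; have entry i j := congr1 (fun B : 'M[R]_2 => B i j) AAT.
move: (entry ord0 ord0) (entry ord0 ord_max) (entry ord_max ord_max).
rewrite /= !mulmx2E !mxE /= => e00 e01 e11.
have [f00 f01 f10 f11] := refl2E R.
have [[r_eq t_eq]|[r_eq t_eq]] := unit_vector_orthogonal e00 e01 e11.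
  by left; split; rewrite ?r_eq ?t_eq; ring.
by right; split; rewrite !mulmx2E ?f00 ?f01 ?f10 ?f11 ?r_eq ?t_eq; ring.
Qed.

Lemma mxprod_orthogonal2 (R : realType) (I : Type) (M : I -> 'M[R]_2) :
  (forall i, orthogonal_mx (M i)) ->
  exists e (f : I * bool -> 'M[R]_2), (forall x y, f x *m f y = f y *m f x) /\
    forall w, mxprod M w = mxprod f (tag_parity e false w) *m refl2_pow R (odd (count e w)).
Proof.
move=> M_orth; pose e i := ~~ `[< is_rot2 (M i) >].
pose A i := if e i then M i *m refl2 R else M i.
have A_rot i : is_rot2 (A i).
  rewrite /A /e; case: asboolP => //= not_rot.
  by case: (orthogonal2_rot (M_orth i)) => // /not_rot.
have M_eq : M = fun i => A i *m refl2_pow R (e i).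
  by apply/funext => i; rewrite /A; case: (e i); rewrite /= ?mulmx1 // -mulmxA refl2K mulmx1.
have f_rot x : is_rot2 (conj_refl2 A x).
  by case: x => i []; rewrite /conj_refl2 /= ?mul1mx ?mulmx1 //; apply: rot2_conj_refl.
exists e, (conj_refl2 A); split; first by move=> x y; apply: rot2_comm.
by move=> w; rewrite -[LHS]mul1mx M_eq (mxprod_refl2_right _ _ false).
Qed.

Lemma word_map_perm_coding (R : realType) d (I : finType) (c : I -> R)
    (M : I -> 'M[R]_d) :
  (forall i, orthogonal_mx (M i)) ->
  d = 1%N \/ d = 2%N \/ (forall i j, M i *m M j = M j *m M i) ->
  exists (J : finType) (Q : seq I -> seq J), perm_coding (word_map c M) Q.
Proof.
move=> M_orth dcase.
have commutative_coding : (forall i j, M i *m M j = M j *m M i) ->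
    perm_coding (word_map c M) id.
  by move=> MC; split=> // w1 w2 eq_w; exact: (word_map_perm c eq_w (mxprod_perm MC eq_w)).
case: dcase => [d1|[d2|]]; last by exists I, id; apply: commutative_coding.
  exists I, id; apply: commutative_coding => i j; move: (M i) (M j); rewrite d1.
  by move=> A B; rewrite [A]mx11_scalar [B]mx11_scalar -!scalar_mxM mulrC.
subst d; have [e [f [fC M_eq]]] := mxprod_orthogonal2 M_orth.
exists (I * bool)%type, (tag_parity e false); split.
  by move=> w; rewrite -(size_map fst) tag_parity_fst.
move=> w1 w2 eq_tags.
have eq_w : perm_eq w1 w2 by have := perm_map fst eq_tags; rewrite !tag_parity_fst.
by apply: (word_map_perm c eq_w); rewrite !M_eq (mxprod_perm fC eq_tags) (permP eq_w).
Qed.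

Lemma exists_pow_le_half (R : realType) (z : R) : 0 <= z < 1 ->
  exists2 q : nat, (0 < q)%N & z ^+ q <= 2%:R^-1.
Proof.
move=> /andP[z_ge0 z_lt1].
have z_norm : `|z| < 1 by rewrite ger0_norm.
have half_gt0 : (0 : R) < 2%:R^-1 by rewrite invr_gt0 ltr0n.
have [N _ zN] := @cvgr_dist_lt _ _ _ _ _ _ _ (cvg_expr z_norm) _ half_gt0.
exists N.+1 => //.
by have := zN N.+1 (leqnSn N); rewrite /= sub0r normrN ger0_norm ?exprn_ge0 // => /ltW.
Qed.

Lemma exists_dyadic_level (R : realType) (x : R) (n : nat) :
  0 < x -> x <= 2%:R ^- n ->
  exists k, (n <= k)%N /\ 2%:R ^- k.+1 < x /\ x <= 2%:R ^- k.
Proof.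
move=> x_gt0 x_le.
have [m x_gt] : exists m, 2%:R ^- (n + m) < x.
  exists (Num.Def.archi_bound x^-1).
  have := upper_nthrootP (x := x^-1) (i := (n + Num.Def.archi_bound x^-1)%N) (leq_addl _ _).
  by rewrite -[X in _ -> _ < X]invrK ltf_pV2 // ?posrE ?invr_gt0 // exprn_gt0.
elim: m n x_le x_gt => [|m IH] n x_le x_gt.
  by rewrite addn0 in x_gt; have := lt_le_trans x_gt x_le; rewrite ltxx.
case: (ltP (2%:R ^- n.+1) x) => x_cmp; first by exists n.
have [|k [nk k_level]] := IH n.+1 x_cmp; first by rewrite addSnnS.
by exists k; split => //; apply: ltnW.
Qed.

Lemma powR_inv_le (R : realType) (N k : nat) (y : R) : (0 < k)%N -> 0 <= y ->
  N%:R <= y ^+ k -> N%:R `^ (k%:R)^-1 <= y.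
Proof.
move=> k_gt0 y_ge0 N_le.
have := @ge0_ler_powR R (k%:R)^-1 _ (N%:R) (y ^+ k) _ _ N_le.
rewrite -powR_mulrn // -powRrM mulfV ?pnatr_eq0 -?lt0n // powRr1 //.
by apply; rewrite ?invr_ge0 ?ler0n ?nnegrE ?ler0n ?exprn_ge0 ?powR_ge0.
Qed.

Lemma powR_inv_ge1 (R : realType) (N k : nat) : (0 < N)%N ->
  (1 : R) <= N%:R `^ (k%:R)^-1.
Proof.
move=> N_gt0; have := @ge0_ler_powR R (k%:R)^-1 _ 1 (N%:R) _ _ _.
by rewrite powR1; apply; rewrite ?invr_ge0 ?ler0n ?nnegrE ?ler0n ?ler1n.
Qed.

Lemma ln_le_twice_sqrt (R : realType) (y : R) : 0 < y -> ln y <= 2 * Num.sqrt y.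
Proof.
move=> y_gt0; have s_gt0 : 0 < Num.sqrt y by rewrite sqrtr_gt0.
rewrite -{1}(sqr_sqrtr (ltW y_gt0)) lnXn // mulr_natl !mulr2n.
by rewrite lerD // ltW // ln_sublinear.
Qed.

Lemma natpow_le_expr (R : realType) (a m : nat) (e : R) : (0 < a)%N -> 0 < e ->
  exists K, forall k, (K <= k)%N -> (((a * k.+1) ^ m)%N%:R : R) <= (1 + e) ^+ k.
Proof.
(* m ln (a (k + 1)) <= 2 m sqrt (2 a k) <= k ln (1 + e) once k >= 8 m^2 a / ln (1 + e)^2. *)
move=> a_gt0 e_gt0; set d := ln (1 + e).
have d_gt0 : 0 < d by apply: ln_gt0; rewrite ltrDl.
exists (Num.Def.trunc (8 * m%:R ^+ 2 * a%:R / d ^+ 2)).+1 => k k_large.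
have k_ge1 : (1 <= k)%N by apply: leq_trans k_large.
have dk : 8 * m%:R ^+ 2 * a%:R < d ^+ 2 * k%:R.
  have k_gt : 8 * m%:R ^+ 2 * a%:R / d ^+ 2 < k%:R.
    by apply: lt_le_trans (truncnS_gt _) _; rewrite ler_nat.
  by move: k_gt; rewrite ltr_pdivrMr ?exprn_gt0 // [k%:R * _]mulrC.
set y : R := (a * k.+1)%N%:R.
have y_gt0 : 0 < y by rewrite ltr0n muln_gt0 a_gt0.
have y_le : y <= 2 * a%:R * k%:R by rewrite /y -!natrM ler_nat; nia.
rewrite natrX -ler_ln ?posrE ?exprn_gt0 ?addr_gt0 // !lnXn ?addr_gt0 // -/d.
rewrite -[ln _ *+ m]mulr_natr -[d *+ k]mulr_natr.
apply: (@le_trans _ _ (2 * Num.sqrt y * m%:R)).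
  by apply: ler_wpM2r => //; apply: ln_le_twice_sqrt.
have lhs_ge0 : 0 <= 2 * Num.sqrt y * m%:R by rewrite !mulr_ge0 ?sqrtr_ge0 ?ler0n.
have rhs_ge0 : 0 <= d * k%:R by rewrite mulr_ge0 ?ler0n ?(ltW d_gt0).
rewrite -(@ler_pXn2r _ 2) ?nnegrE // !exprMn (sqr_sqrtr (ltW y_gt0)).
have kR_ge1 : (1 : R) <= k%:R by rewrite ler1n.
have m2_ge0 : (0 : R) <= m%:R ^+ 2 by rewrite exprn_ge0.
nra.
Qed.

Lemma limn_esup_root_poly (R : realType) (N : nat -> nat) (a m : nat) :
  (0 < a)%N -> (forall k, N k <= (a * k.+1) ^ m)%N ->
  (forall n, exists2 k, (n <= k)%N & (0 < N k)%N) ->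
  limn_esup (fun k => ((N k)%:R `^ (k%:R)^-1)%:E) = 1%:E :> \bar R.
Proof.
move=> a_gt0 N_le N_gt0; rewrite limn_esup_lim; apply/eqP; rewrite eq_le.
apply/andP; split.
  apply/lee_addgt0Pr => e e_gt0.
  have [K poly_le] := natpow_le_expr m a_gt0 e_gt0.
  apply: lime_le; first exact: is_cvg_esups.
  exists K.+1 => // n /= Kn; apply: ge_ereal_sup => _ [k /= nk <-].
  have Kk : (K < k)%N by apply: leq_trans nk.
  rewrite -EFinD lee_fin; apply: powR_inv_le; first exact: leq_trans Kk.
    by rewrite addr_ge0 // ltW.
  by apply: le_trans (poly_le k (ltnW Kk)); rewrite ler_nat.
apply: lime_ge; first exact: is_cvg_esups.
apply: nearW => n; have [k nk Nk_gt0] := N_gt0 n.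
apply: le_trans (ereal_sup_ubound _); last by exists k.
by rewrite lee_fin powR_inv_ge1.
Qed.

Section ContractionRatios.
Variables (R : realType) (I : finType) (c : I -> R).
Hypothesis c_bounds : forall i, 0 < c i < 1.

Lemma word_ratio_le_pow (r : R) w : (forall i, c i <= r) ->
  word_ratio c w <= r ^+ size w.
Proof.
move=> c_le; elim: w => [|i w IH]; first by rewrite /word_ratio big_nil.
have [ci_gt0 _] := andP (c_bounds i).
have ratio_ge0 : 0 <= word_ratio c w by apply: prodr_ge0 => j _; case/andP: (c_bounds j) => /ltW.
by rewrite /word_ratio big_cons -/(word_ratio c w) exprS ler_pM // ltW.
Qed.

Lemma word_ratio_nseq i j : word_ratio c (nseq j i) = c i ^+ j.
Proof.
elim: j => [|j IH]; first by rewrite /word_ratio big_nil.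
by rewrite /word_ratio /= big_cons -/(word_ratio c _) IH exprS.
Qed.

Lemma size_words_level :
  exists q, forall k w, words_level c k w -> (size w <= q * k.+1)%N.
Proof.
pose r := \big[Num.max/0]_i c i.
have c_le i : c i <= r by apply: le_bigmax.
have r_ge0 : 0 <= r by apply: bigmax_ge_id.
have r_lt1 : r < 1 by apply: bigmax_lt => // i _; case/andP: (c_bounds i).
have [q _ r_half] := exists_pow_le_half (introT andP (conj r_ge0 r_lt1)).
exists q => k w [_ [level_w _]]; rewrite leqNgt; apply/negP => long_w.
have : word_ratio c w <= 2%:R ^- k.+1.
  apply: le_trans (word_ratio_le_pow w c_le) _.
  apply: le_trans (ler_wiXn2l r_ge0 (ltW r_lt1) (ltnW long_w)) _.
  by rewrite exprM -exprVn lerXn2r ?nnegrE ?exprn_ge0 ?invr_ge0 ?ler0n.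
by rewrite leNgt level_w.
Qed.

Lemma words_level_inhabited (i : I) n :
  exists2 k, (n <= k)%N & exists w, words_level c k w.
Proof.
have [ci_gt0 ci_lt1] := andP (c_bounds i).
have [q q_gt0 ci_half] := exists_pow_le_half (introT andP (conj (ltW ci_gt0) ci_lt1)).
set j := (q * n.+1)%N.
have x_gt0 : 0 < c i ^+ j by rewrite exprn_gt0.
have x_le : c i ^+ j <= 2%:R ^- n.+1.
  by rewrite /j exprM -exprVn lerXn2r // nnegrE ?invr_ge0 ?ler0n // exprn_ge0 // ltW.
have [k [nk k_level]] := exists_dyadic_level x_gt0 x_le.
exists k; first exact: ltnW.
exists (nseq j i); split; last by rewrite word_ratio_nseq.
by rewrite -size_eq0 size_nseq muln_eq0 negb_or -!lt0n q_gt0.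
Qed.

End ContractionRatios.

Theorem lemma4p4 (R : realType) (d : nat) (I : finType)
    (c : I -> R) (M : I -> 'M[R]_d) (b : I -> 'cV[R]_d)
    (hI : (0 < #|I|)%N)
    (hc : forall i, 0 < c i < 1)
    (hM : forall i, orthogonal_mx (M i))
    (hcase : d = 1%N \/ d = 2%N \/ (forall i j, M i *m M j = M j *m M i)) :
  limn_esup (fun k : nat =>
     (((num_maps_level c M k)%:R : R) `^ (k%:R)^-1)%:E) = 1%:E.
Proof.
have [J [Q coding]] := word_map_perm_coding c hM hcase.
have [q size_level] := size_words_level hc.
have card_level k := card_image_perm_coding coding (size_level k).
apply: (@limn_esup_root_poly _ _ q.+1 #|J|) => // [k|n].
  apply: leq_trans (geq_card_fset_set (card_level k)) _.
  by elim: #|J| => // m IH; rewrite !expnS leq_mul //; nia.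
have [i _] := card_gt0P hI.
have [k nk [w level_w]] := words_level_inhabited hc i n.
exists k => //; rewrite cardfs_gt0; apply/fset0Pn; exists (word_map c M w).
have fin_level : finite_set (word_map c M @` words_level c k).
  by apply/finite_set_leP; exists ((q * k.+1).+1 ^ #|J|)%N.
by rewrite in_fset_set //; apply/mem_set; exists w.
Qed.
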